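(* For all messages $M,M'$ and input histories $s,s'$: (1) if $s\,R^c_M\,s'$ then $M\in\mathrm{cl}_{\mathsf{CM}}(s')$; (2) if $M\in\mathrm{cl}_{\mathsf{CM}}(s)$ then $s\,R^c_M\,s$; (3) there is an input history $s'$ with $s\,R^c_M\,s'$; (4) $R^c_M\subseteq R^c_{\mathsf{CM}}={\sqsubseteq}$; (5) if $s\,R^c_{\mathsf{CM}}\,t$ and $t\,R^c_M\,s'$ for some $t$, then $s\,R^c_M\,s'$; (6) if $M\preceq M'$ then $R^c_M\subseteq R^c_{M'}$.
   Context: Fix a finite set $\mathcal{A}$ of agent names containing a distinguished name $\mathsf{CM}$ (the communication medium). Messages are terms $M ::= a \mid B \mid (M,M)$ with $a\in\mathcal{A}$, $B$ optional application-specific data constants, $(M,M')$ pairs. Input histories are finite words of input events $\mathrm{in}_a(M)$ (''agent $a$ receives message $M$''), $a\in\mathcal{A}$, $M$ a message; $\mathtt{0}$ is the empty history, $\mathrm{in}_a(M)(s)$ extends $s$ by the event $\mathrm{in}_a(M)$, and $\star$ is word concatenation (with neutral element $\mathtt{0}$). The projection $\pi_a$ is defined by $\pi_a(\mathtt{0})=\mathtt{0}$ and $\pi_a(\mathrm{in}_b(M)(s))=\mathrm{in}_b(M)(\pi_a(s))$ if $a\in\{b,\mathsf{CM}\}$, and $=\pi_a(s)$ otherwise. $\mathrm{msgs}(s)$ is the set of messages occurring in events of $s$, and $\mathrm{cl}_a(s)$ is the smallest set of messages containing $a$ and $\mathrm{msgs}(\pi_a(s))$, closed under forming pairs of its elements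 and taking both components of pairs in it. $s\sqsubseteq_a s'$ iff there is $s''$ with $\pi_a(s)\star\pi_a(s'')=\pi_a(s')$; ${\sqsubseteq}:={\sqsubseteq_{\mathsf{CM}}}$; $s\equiv_a s'$ iff $s\sqsubseteq_a s'$ and $s'\sqsubseteq_a s$. The concrete accessibility: $s\,R^c_M\,s'$ iff there is an input history $\tilde s$ with $s\sqsubseteq_{\mathsf{CM}}\tilde s$, $M\in\mathrm{cl}_{\mathsf{CM}}(\tilde s)$ and $\tilde s\equiv_{\mathsf{CM}} s'$. For messages, $M\preceq M'$ iff for every input history $s$, $M\in\mathrm{cl}_{\mathsf{CM}}(s)$ implies $M'\in\mathrm{cl}_{\mathsf{CM}}(s)$. *)

From mathcomp Require Import all_boot.
Set Implicit Arguments. Unset Strict Implicit. Unset Printing Implicit Defensive.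

Section Model.
Variable Agent : finType.
Variable Data : Type.
Variable CM : Agent.        (* the communication medium *)

Inductive msg : Type :=
| MAgent of Agent
| MData of Data
| MPair of msg & msg.

Inductive event : Type := Ev of Agent & msg.

(* input histories: finite words of input events;
   [::] is 0, (Ev a M :: s) is in_a(M)(s), ++ is the concatenation star *)
Definition history := seq event.

Fixpoint proj (a : Agent) (s : history) : history :=
  match s with
  | [::] => [::]
  | Ev b M :: s' => if (a == b) || (a == CM) then Ev b M :: proj a s'
                    else proj a s'
  end.

Fixpoint msgs (s : history) (M : msg) : Prop :=
  match s with
  | [::] => False
  | Ev _ N :: s' => N = M \/ msgs s' M
  end.

Inductive cl (a : Agent) (s : history) : msg -> Prop :=
| cl_self : cl a s (MAgent a)
| cl_msgs M : msgs (proj a s) M -> cl a s M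
| cl_pair M1 M2 : cl a s M1 -> cl a s M2 -> cl a s (MPair M1 M2)
| cl_fst M1 M2 : cl a s (MPair M1 M2) -> cl a s M1
| cl_snd M1 M2 : cl a s (MPair M1 M2) -> cl a s M2.

Definition sqsub_a (a : Agent) (s s' : history) : Prop :=
  exists s'', proj a s ++ proj a s'' = proj a s'.

Definition sqsub (s s' : history) : Prop := sqsub_a CM s s'.

Definition equiv_a (a : Agent) (s s' : history) : Prop :=
  sqsub_a a s s' /\ sqsub_a a s' s.

Definition Rc (M : msg) (s s' : history) : Prop :=
  exists st, sqsub_a CM s st /\ cl CM st M /\ equiv_a CM st s'.

Definition msg_le (M M' : msg) : Prop :=
  forall s, cl CM s M -> cl CM s M'.

End Model.

From mathcomp Require Import all_boot.

(* Since the medium sees every event, [proj CM] is the identity: [⊑] is the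
   prefix order and [≡_CM] is equality.  Hence [s R^c_M s'] says exactly that
   [s] is a prefix of [s'] and [M ∈ cl_CM(s')], from which all six items are
   immediate; (3) is witnessed by appending the event [in_CM(M)] to [s]. *)

Section MediumView.
Variables (Agent : finType) (Data : Type) (CM : Agent).
Implicit Types (s t u : history Agent Data) (M : msg Agent Data).

Lemma proj_medium s : proj CM CM s = s.
Proof. by elim: s => [|[b N] s IHs] //=; rewrite eqxx orbT IHs. Qed.

Lemma sqsub_mediumP s t : sqsub_a CM CM s t <-> exists x, s ++ x = t.
Proof.
rewrite /sqsub_a; split=> [[x]|[x <-]]; rewrite !proj_medium; first by exists x.
by exists x; rewrite proj_medium.
Qed.

Lemma sqsub_medium_refl s : sqsub_a CM CM s s.
Proof. by apply/sqsub_mediumP; exists [::]; rewrite cats0. Qed.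

Lemma sqsub_medium_trans s t u :
  sqsub_a CM CM s t -> sqsub_a CM CM t u -> sqsub_a CM CM s u.
Proof.
move=> /sqsub_mediumP[x <-] /sqsub_mediumP[y <-].
by apply/sqsub_mediumP; exists (x ++ y); rewrite catA.
Qed.

Lemma equiv_medium_eq s t : equiv_a CM CM s t -> s = t.
Proof.
case=> /sqsub_mediumP[x def_t] /sqsub_mediumP[y def_s].
have /eqP : size (s ++ x ++ y) = size s by rewrite catA def_t def_s.
rewrite !size_cat -{2}[size s]addn0 eqn_add2l addn_eq0 => /andP[/nilP x0 _].
by rewrite -def_t x0 cats0.
Qed.

Lemma RcE M s s' : Rc CM M s s' <-> sqsub_a CM CM s s' /\ cl CM CM s' M.
Proof.
split=> [[st [le_s_st [clM /equiv_medium_eq <-]]] | [le_s_s' clM]] //.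
by exists s'; do !split=> //; apply: sqsub_medium_refl.
Qed.

Lemma msgs_rcons s a M : msgs (rcons s (Ev a M)) M.
Proof. by elim: s => [|[b N] s IHs] /=; [left | right]. Qed.

Lemma cl_medium_rcons s a M : cl CM CM (rcons s (Ev a M)) M.
Proof. by apply: cl_msgs; rewrite proj_medium; apply: msgs_rcons. Qed.

End MediumView.

Theorem proposition2 (Agent : finType) (Data : Type) (CM : Agent)
    (M M' : msg Agent Data) (s s' : history Agent Data) :
  (Rc CM M s s' -> cl CM CM s' M) /\
  (cl CM CM s M -> Rc CM M s s) /\
  (exists s'' : history Agent Data, Rc CM M s s'') /\
  ((forall u v, Rc CM M u v -> Rc CM (@MAgent Agent Data CM) u v) /\
   (forall u v, Rc CM (@MAgent Agent Data CM) u v <-> sqsub CM u v)) /\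
  ((exists t, Rc CM (@MAgent Agent Data CM) s t /\ Rc CM M t s') -> Rc CM M s s') /\
  (msg_le CM M M' -> forall u v, Rc CM M u v -> Rc CM M' u v).
Proof.
have RcCM (u v : history Agent Data) :
    Rc CM (@MAgent Agent Data CM) u v <-> sqsub CM u v.
  by split=> [/RcE[]|le_uv] //; apply/RcE; split=> //; apply: cl_self.
split; first by case/RcE.
split; first by move=> clM; apply/RcE; split=> //; apply: sqsub_medium_refl.
split.
  exists (rcons s (Ev CM M)); apply/RcE; split; last exact: cl_medium_rcons.
  by apply/sqsub_mediumP; exists [:: Ev CM M]; rewrite cats1.
split; first by split=> // u v /RcE[le_uv _]; apply/RcCM.
split.
  case=> t [/RcCM le_st /RcE[le_ts' clM]].
  by apply/RcE; split=> //; apply: sqsub_medium_trans le_ts'.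
by move=> le_MM' u v /RcE[le_uv clM]; apply/RcE; split=> //; apply: le_MM'.
Qed.
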